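(* For every positive integer $n$, $UQ(\mathrm{OMB}_n)=1$ and $UQC(\mathrm{DOMB}_n)\ge \frac{\log n-3}{2}$.
   Context: For $x\in\{0,1\}^n$, $\mathrm{OMB}_n(x)=k \bmod 2$ where $k$ is the largest index with $x_k=1$ ($k=0$ if $x=0^n$). For $a,b\in\{0,1\}^n$, $\mathrm{DOMB}_n(a,b)=\mathrm{OMB}_n(a\wedge b)$, where $a\wedge b$ is the bitwise AND. $UQ(f)$ is the minimum number of oracle queries (oracle $O_x:|i,b,z\rangle\mapsto|i,b\oplus x_i,z\rangle$) of a quantum query algorithm that on every input outputs $f(x)$ with probability strictly greater than $1/2$. $UQC(g)$ for $g:\{0,1\}^{n_1}\times\{0,1\}^{n_2}\rightarrow\{0,1\}$ is the minimum number of qubits communicated in a two-party (two-way, no prior shared entanglement) quantum communication protocol that on every input outputs $g$ with probability strictly greater than $1/2$. $\log$ is base 2. *)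

From HB Require Import structures.
From mathcomp Require Import all_boot all_order all_algebra.
From mathcomp Require Import complex.
From mathcomp Require Import reals exp.
Set Implicit Arguments. Unset Strict Implicit. Unset Printing Implicit Defensive.
Import Order.TTheory GRing.Theory Num.Theory.
Local Open Scope ring_scope.

(* x : {ffun 'I_n -> bool} encodes x_1 ... x_n with x_k = x (k-1). *)
Definition omb (n : nat) (x : {ffun 'I_n -> bool}) : bool :=
  odd (\max_(i < n | x i) i.+1).

Definition domb (n : nat) (a b : {ffun 'I_n -> bool}) : bool :=
  omb [ffun i => a i && b i].

Section Quantum.
Variable R : realType.
Local Notation C := R[i].

Definition op (X : finType) := X -> X -> C.
Definition vec (X : finType) := X -> C.

Definition apply (X : finType) (G : op X) (v : vec X) : vec X :=
  fun x => \sum_y G x y * v y.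

Definition sqmod (z : C) : R := complex.Re z ^+ 2 + complex.Im z ^+ 2.
Definition norm2 (X : finType) (v : vec X) : R := \sum_x sqmod (v x).

Definition unitary (X : finType) (G : op X) : Prop :=
  forall x z, \sum_y (G y x)^* * G y z = (x == z)%:R.

Definition projector (X : finType) (P : op X) : Prop :=
  (forall x y, P x y = (P y x)^*) /\ (forall x z, \sum_y P x y * P y z = P x z).

(* basis |i, b, z> : query index i, answer bit b, workspace z (dimension w.+1) *)
Definition QI (n w : nat) := ('I_n * bool * 'I_w.+1)%type.

Definition oracle n w (x : {ffun 'I_n -> bool}) : op (QI n w) :=
  fun u v => ((u.1.1 == v.1.1) && (u.1.2 == v.1.2 (+) x v.1.1) && (u.2 == v.2))%:R.

Fixpoint qstate n w (U : nat -> op (QI n w)) (x : {ffun 'I_n -> bool})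
    (psi0 : vec (QI n w)) (t : nat) : vec (QI n w) :=
  match t with
  | 0 => apply (U 0%N) psi0
  | t'.+1 => apply (U t) (apply (@oracle n w x) (qstate U x psi0 t'))
  end.

Definition ue_query (n : nat) (f : {ffun 'I_n -> bool} -> bool) (T : nat) : Prop :=
  exists (w : nat) (psi0 : vec (QI n w))
         (U : nat -> op (QI n w)) (P : op (QI n w)),
    [/\ norm2 psi0 = 1, (forall t, (t <= T)%N -> unitary (U t)), projector P &
     forall x, let p := norm2 (apply P (qstate U x psi0 T)) in
       if f x then 1 / 2 < p else 1 / 2 < 1 - p].

Definition UQ_is (n : nat) (f : {ffun 'I_n -> bool} -> bool) (k : nat) : Prop :=
  ue_query f k /\ forall t, ue_query f t -> (k <= t)%N.

(* Global space: C^{pA+1} (Alice private) (x) (C^2)^{(x)N} (message qubits)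
   (x) C^{pB+1} (Bob private).  At cut j, Alice owns her private register and
   qubits with index < j, Bob owns qubits with index >= j and his private
   register. *)
Definition CI (pA N pB : nat) := ('I_pA.+1 * {ffun 'I_N -> bool} * 'I_pB.+1)%type.

Section Comm.
Variables pA N pB : nat.
Local Notation X := (CI pA N pB).

Definition alice_part (j : nat) (u : X) : X :=
  (u.1.1, [ffun i : 'I_N => ((i < j)%N && u.1.2 i)], ord0).
Definition bob_part (j : nat) (u : X) : X :=
  (ord0, [ffun i : 'I_N => ((j <= i)%N && u.1.2 i)], u.2).

(* U (x) I_Bob, for U given on Alice's part *)
Definition liftA (j : nat) (U : op X) : op X :=
  fun u v => if bob_part j u == bob_part j v
             then U (alice_part j u) (alice_part j v) else 0.
(* I_Alice (x) V *)
Definition liftB (j : nat) (V : op X) : op X :=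
  fun u v => if alice_part j u == alice_part j v
             then V (bob_part j u) (bob_part j v) else 0.

Definition lift (alice : bool) (j : nat) (U : op X) : op X :=
  if alice then liftA j U else liftB j U.

(* cut position: each step the sender (s t = true: Alice) sends one qubit *)
Fixpoint cut (j0 : nat) (s : nat -> bool) (t : nat) : nat :=
  match t with
  | 0 => j0
  | t'.+1 => if s t' then (cut j0 s t').-1 else (cut j0 s t').+1
  end.

Definition init_state : vec X :=
  fun u => ((u.1.1 == ord0) && (u.1.2 == [ffun => false]) && (u.2 == ord0))%:R.

(* step t: the sender applies a local unitary on its current registers,
   then sends one qubit to the other party *)
Fixpoint cstate (j0 : nat) (s : nat -> bool) (UA UB : nat -> op X) (t : nat) : vec X :=
  match t with
  | 0 => init_state
  | t'.+1 => apply (lift (s t') (cut j0 s t') (if s t' then UA t' else UB t'))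
                   (cstate j0 s UA UB t')
  end.
End Comm.

(* g has an unbounded-error quantum protocol (no prior entanglement)
   communicating c qubits in total *)
Definition ue_comm (n1 n2 : nat)
    (g : {ffun 'I_n1 -> bool} -> {ffun 'I_n2 -> bool} -> bool) (c : nat) : Prop :=
  exists (pA N pB j0 : nat) (s : nat -> bool)
         (UA : {ffun 'I_n1 -> bool} -> nat -> op (CI pA N pB))
         (UB : {ffun 'I_n2 -> bool} -> nat -> op (CI pA N pB))
         (o : bool)
         (PA : {ffun 'I_n1 -> bool} -> op (CI pA N pB))
         (PB : {ffun 'I_n2 -> bool} -> op (CI pA N pB)),
    (j0 <= N)%N /\
     (forall t, (t < c)%N ->
        if s t then (0 < cut j0 s t)%N else (cut j0 s t < N)%N) /\
     (forall a t, (t < c)%N -> s t -> unitary (liftA (cut j0 s t) (UA a t))) /\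
     (forall b t, (t < c)%N -> ~~ s t -> unitary (liftB (cut j0 s t) (UB b t))) /\
     (forall a, o -> projector (liftA (cut j0 s c) (PA a))) /\
     (forall b, ~~ o -> projector (liftB (cut j0 s c) (PB b))) /\
     forall a b,
       let P := lift o (cut j0 s c) (if o then PA a else PB b) in
       let p := norm2 (apply P (cstate j0 s (UA a) (UB b) c)) in
       if g a b then 1 / 2 < p else 1 / 2 < 1 - p.

Definition UQC_ge (n1 n2 : nat)
    (g : {ffun 'I_n1 -> bool} -> {ffun 'I_n2 -> bool} -> bool) (r : R) : Prop :=
  forall c, ue_comm g c -> r <= c%:R.

End Quantum.

Definition log2 (R : realType) (x : R) : R := ln x / ln 2.

(* UQ(OMB_n) = 1: a single query to a superposition over all indices, in which
   index i carries weight proportional to 2^i and is accepted according to the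
   parity of i, accepts with probability 1/2 + eps (S(x) - 1/2), where
   S(x) = sum over the set bits of (-1)^i 2^i has the sign of the top set bit;
   without a query the inputs 0^n and 10^(n-1) cannot be told apart.

   UQC(DOMB_n): after c qubits have been sent, the global state is a sum of at
   most 2^c products of a vector of Alice and a vector of Bob, so the acceptance
   probability is a real inner product <F(a), G(b)> in dimension 2 * 4^c.
   Thresholding such inner products at 1/2 shatters at most 2 * 4^c + 1 points,
   while DOMB_n, restricted to Bob's inputs e_1, e_3, e_5, ..., shatters
   ceil(n/2) points.  Hence n <= 8 * 4^c, i.e. c >= (log n - 3) / 2. *)

From Pilot Require Import Defs.
From HB Require Import structures.
From mathcomp Require Import all_boot all_order all_algebra.
From mathcomp Require Import complex.
From mathcomp Require Import reals exp boolp.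
From mathcomp Require Import zify ring lra.
Set Implicit Arguments. Unset Strict Implicit. Unset Printing Implicit Defensive.
Import Order.TTheory GRing.Theory Num.Theory.
Local Open Scope ring_scope.

(** * Cutting the global register *)

Section CutParts.
Variables pA N pB : nat.
Local Notation X := (CI pA N pB).

Definition cut_merge (j : nat) (w z : X) : X :=
  (w.1.1, [ffun i : 'I_N => if (i < j)%N then w.1.2 i else z.1.2 i], z.2).

Lemma alice_part_merge j (w z : X) : alice_part j (cut_merge j w z) = alice_part j w.
Proof.
congr (_, _, _); apply/ffunP => i; rewrite !ffunE; by case: ifP.
Qed.

Lemma bob_part_merge j (w z : X) : bob_part j (cut_merge j w z) = bob_part j z.
Proof.
congr (_, _, _); apply/ffunP => i; rewrite !ffunE; by case: ltnP.
Qed.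

Lemma cut_merge_parts j (u : X) : cut_merge j (alice_part j u) (bob_part j u) = u.
Proof.
case: u => [[a q] b]; congr (_, _, _); apply/ffunP => i; rewrite !ffunE; by case: ltnP.
Qed.

Lemma alice_part_le i j (u : X) :
  (i <= j)%N -> alice_part i (alice_part j u) = alice_part i u.
Proof.
move=> le_ij; congr (_, _, _); apply/ffunP => k; rewrite !ffunE.
by case: (ltnP k i) => //= lt_ki; rewrite (leq_trans lt_ki le_ij).
Qed.

Lemma bob_part_le i j (u : X) :
  (i <= j)%N -> bob_part j (bob_part i u) = bob_part j u.
Proof.
move=> le_ij; congr (_, _, _); apply/ffunP => k; rewrite !ffunE.
by case: (leqP j k) => //= le_jk; rewrite (leq_trans le_ij le_jk).
Qed.

Lemma alice_partK j (u : X) : alice_part j (alice_part j u) = alice_part j u.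
Proof. exact: alice_part_le. Qed.

Lemma bob_partK j (u : X) : bob_part j (bob_part j u) = bob_part j u.
Proof. exact: bob_part_le. Qed.

Lemma sum_cut_parts (V : nmodType) j (F : X -> X -> V) :
  \sum_u F (alice_part j u) (bob_part j u) =
  \sum_(w | alice_part j w == w) \sum_(z | bob_part j z == z) F w z.
Proof.
rewrite pair_big /= (reindex (fun u => (alice_part j u, bob_part j u))) /=.
  by apply: eq_bigl => u; rewrite alice_partK bob_partK !eqxx.
exists (fun p => cut_merge j p.1 p.2) => [u _|[w z]] /=; first exact: cut_merge_parts.
by rewrite inE /= => /andP[/eqP aw /eqP bz]; rewrite alice_part_merge bob_part_merge aw bz.
Qed.

(* Message qubits with index [m >= N] read as [false] and cannot be set. *)
Definition qubit (m : nat) (u : X) : bool :=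
  [exists i : 'I_N, (i == m :> nat) && u.1.2 i].

Definition set_qubit (m : nat) (u : X) (q : bool) : X :=
  (u.1.1, [ffun i : 'I_N => u.1.2 i || ((i == m :> nat) && q)], u.2).

Lemma qubitE m (u : X) (i : 'I_N) : i = m :> nat -> qubit m u = u.1.2 i.
Proof.
move=> i_m; apply/existsP/idP => [[k /andP[/eqP k_m]]|ui].
  by have -> : i = k by apply: val_inj; exact: etrans i_m (esym k_m).
by exists i; rewrite ui andbT; apply/eqP.
Qed.

Lemma qubit_alice_part m j (u : X) : (m < j)%N -> qubit m (alice_part j u) = qubit m u.
Proof.
by move=> lt_mj; apply: eq_existsb => i; rewrite ffunE; case: eqP => //= ->; rewrite lt_mj.
Qed.

Lemma qubit_bob_part m j (u : X) : (j <= m)%N -> qubit m (bob_part j u) = qubit m u.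
Proof.
by move=> le_jm; apply: eq_existsb => i; rewrite ffunE; case: eqP => //= ->; rewrite le_jm.
Qed.

Lemma alice_part_insert_qubit j (u : X) :
  alice_part j (set_qubit j.-1 (alice_part j.-1 u) (qubit j.-1 u)) = alice_part j u.
Proof.
congr (_, _, _); apply/ffunP => i; rewrite !ffunE.
have [i_j|ne_ij] := eqVneq (i : nat) j.-1.
  by rewrite (qubitE _ i_j) i_j ltnn; case: (ltnP j.-1 j); lia.
rewrite orbF; case: (u.1.2 i); rewrite ?andbT ?andbF //.
by apply/idP/idP; lia.
Qed.

Lemma bob_part_insert_qubit j (u : X) :
  bob_part j (set_qubit j (bob_part j.+1 u) (qubit j u)) = bob_part j u.
Proof.
congr (_, _, _); apply/ffunP => i; rewrite !ffunE.
have [i_j|ne_ij] := eqVneq (i : nat) j; first by rewrite (qubitE _ i_j) i_j leqnn ltnn.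
rewrite orbF; case: (u.1.2 i); rewrite ?andbT ?andbF //.
by apply/idP/idP; lia.
Qed.

Definition ground : X := (ord0, [ffun => false], ord0).

Lemma eq_ground_parts j (u : X) :
  (u == ground) = (alice_part j u == ground) && (bob_part j u == ground).
Proof.
apply/eqP/andP => [->|[/eqP au /eqP bu]].
  by split; apply/eqP; congr (_, _, _); apply/ffunP => i; rewrite !ffunE andbF.
rewrite -(cut_merge_parts j u) au bu; congr (_, _, _).
by apply/ffunP => i; rewrite !ffunE; case: ifP.
Qed.

End CutParts.

(** * Product decompositions across a cut *)

Section Decomposition.
Variable R : realType.
Local Notation C := R[i].
Variables pA N pB : nat.
Local Notation X := (CI pA N pB).

Definition decomposes (j : nat) (K : finType) (f g : K -> X -> C) (psi : vec R X) :=
  forall u, psi u = \sum_k f k (alice_part j u) * g k (bob_part j u).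

Lemma decomposes_ground j :
  decomposes j (fun (_ : unit) w => (w == ground pA N pB)%:R)
               (fun _ z => (z == ground pA N pB)%:R) (@init_state R pA N pB).
Proof.
move=> u; rewrite (big_pred1 tt) //.
have -> : @init_state R pA N pB u = (u == ground pA N pB)%:R by [].
by rewrite {1}(eq_ground_parts j u); case: (_ == _); case: (_ == _); rewrite ?mulr1 ?mulr0.
Qed.

Lemma decomposes_liftA j (K : finType) (f g : K -> X -> C) psi (U : op R X) :
  decomposes j f g psi ->
  decomposes j (fun k w => \sum_(w' | alice_part j w' == w') U w w' * f k w') g
    (apply (liftA j U) psi).
Proof.
move=> dec u.
pose F w z := (if bob_part j u == z then U (alice_part j u) w else 0) *
  \sum_k f k w * g k z.
transitivity (\sum_v F (alice_part j v) (bob_part j v)).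
  by apply: eq_bigr => v _; rewrite dec.
rewrite sum_cut_parts /F.
transitivity (\sum_(w | alice_part j w == w)
    U (alice_part j u) w * \sum_k f k w * g k (bob_part j u)).
  apply: eq_bigr => w _; rewrite (bigD1 (bob_part j u)) ?bob_partK //= eqxx.
  by rewrite [X in _ + X]big1 ?addr0 // => z /andP[_ /negbTE]; rewrite eq_sym => ->; rewrite mul0r.
under eq_bigr do rewrite mulr_sumr; rewrite exchange_big /=.
by apply: eq_bigr => k _; rewrite mulr_suml; apply: eq_bigr => w _; rewrite mulrA.
Qed.

Lemma decomposes_liftB j (K : finType) (f g : K -> X -> C) psi (V : op R X) :
  decomposes j f g psi ->
  decomposes j f (fun k z => \sum_(z' | bob_part j z' == z') V z z' * g k z')
    (apply (liftB j V) psi).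
Proof.
move=> dec u.
pose F w z := (if alice_part j u == w then V (bob_part j u) z else 0) *
  \sum_k f k w * g k z.
transitivity (\sum_v F (alice_part j v) (bob_part j v)).
  by apply: eq_bigr => v _; rewrite dec.
rewrite sum_cut_parts /F (bigD1 (alice_part j u)) ?alice_partK //= eqxx.
rewrite [X in _ + X]big1 ?addr0 => [|w /andP[_ /negbTE]]; last first.
  by rewrite eq_sym => ->; apply: big1 => z _; rewrite mul0r.
under eq_bigr do rewrite mulr_sumr; rewrite exchange_big /=.
by apply: eq_bigr => k _; rewrite mulr_sumr; apply: eq_bigr => z _; rewrite mulrCA.
Qed.

(* When a qubit crosses the cut, each term splits according to the value of that qubit. *)
Lemma decomposes_cut_pred j (K : finType) (f g : K -> X -> C) psi :
  decomposes j f g psi ->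
  decomposes j.-1
    (fun p w => f p.1 (alice_part j (set_qubit j.-1 w p.2)))
    (fun p z => (qubit j.-1 z == p.2)%:R * g p.1 (bob_part j z)) psi.
Proof.
move=> dec u; rewrite dec -(pair_bigA _ (fun k q =>
  f k (alice_part j (set_qubit j.-1 (alice_part j.-1 u) q)) *
  ((qubit j.-1 (bob_part j.-1 u) == q)%:R * g k (bob_part j (bob_part j.-1 u))))) /=.
apply: eq_bigr => k _; rewrite big_bool qubit_bob_part // bob_part_le ?leq_pred //.
rewrite -(alice_part_insert_qubit j u).
by case: (qubit j.-1 u); rewrite /= ?mul1r ?mul0r ?mulr0 ?addr0 ?add0r.
Qed.

Lemma decomposes_cut_succ j (K : finType) (f g : K -> X -> C) psi :
  decomposes j f g psi ->
  decomposes j.+1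
    (fun p w => (qubit j w == p.2)%:R * f p.1 (alice_part j w))
    (fun p z => g p.1 (bob_part j (set_qubit j z p.2))) psi.
Proof.
move=> dec u; rewrite dec -(pair_bigA _ (fun k q =>
  ((qubit j (alice_part j.+1 u) == q)%:R * f k (alice_part j (alice_part j.+1 u))) *
  g k (bob_part j (set_qubit j (bob_part j.+1 u) q)))) /=.
apply: eq_bigr => k _; rewrite big_bool qubit_alice_part // alice_part_le //.
rewrite -(bob_part_insert_qubit j u).
by case: (qubit j u); rewrite /= ?mul1r ?mul0r ?addr0 ?add0r.
Qed.

Lemma Re_sum (I : finType) (F : I -> C) : complex.Re (\sum_i F i) = \sum_i complex.Re (F i).
Proof. by apply: big_morph => // -[a b] [c d]. Qed.

Definition alice_gram j (K : finType) (f : K -> X -> C) k l :=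
  \sum_(w | alice_part j w == w) f k w * (f l w)^*.
Definition bob_gram j (K : finType) (g : K -> X -> C) k l :=
  \sum_(z | bob_part j z == z) g k z * (g l z)^*.

Lemma norm2_gram j (K : finType) (f g : K -> X -> C) psi :
  decomposes j f g psi ->
  norm2 psi = complex.Re (\sum_k \sum_l alice_gram j f k l * bob_gram j g k l).
Proof.
move=> dec; transitivity (complex.Re (\sum_u psi u * (psi u)^*)).
  by rewrite Re_sum; apply: eq_bigr => u _; case: (psi u) => a b; rewrite /sqmod /=; ring.
congr complex.Re.
rewrite (eq_bigr (fun u => \sum_k \sum_l (f k (alice_part j u) * (f l (alice_part j u))^*) *
   (g k (bob_part j u) * (g l (bob_part j u))^*))) => [|u _]; last first.
  rewrite dec rmorph_sum mulr_suml; apply: eq_bigr => k _.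
  by rewrite mulr_sumr; apply: eq_bigr => l _; rewrite rmorphM; ring.
rewrite exchange_big; apply: eq_bigr => k _; rewrite exchange_big; apply: eq_bigr => l _.
rewrite (sum_cut_parts j (fun w z => (f k w * (f l w)^*) * (g k z * (g l z)^*))).
by rewrite mulr_suml; apply: eq_bigr => w _; rewrite mulr_sumr.
Qed.

Definition alice_coord j (K : finType) (f : K -> X -> C) k l (b : bool) : R :=
  if b then complex.Re (alice_gram j f k l) else complex.Im (alice_gram j f k l).
Definition bob_coord j (K : finType) (g : K -> X -> C) k l (b : bool) : R :=
  if b then complex.Re (bob_gram j g k l) else - complex.Im (bob_gram j g k l).

Lemma norm2_decomposes j (K : finType) (f g : K -> X -> C) psi :
  decomposes j f g psi ->
  norm2 psi = \sum_(p : K * K * bool)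
    alice_coord j f p.1.1 p.1.2 p.2 * bob_coord j g p.1.1 p.1.2 p.2.
Proof.
move=> dec; rewrite (norm2_gram dec).
rewrite -(pair_bigA _ (fun q b => alice_coord j f q.1 q.2 b * bob_coord j g q.1 q.2 b)).
rewrite -(pair_bigA _ (fun k l => \sum_b alice_coord j f k l b * bob_coord j g k l b)).
rewrite Re_sum; apply: eq_bigr => k _.
rewrite Re_sum; apply: eq_bigr => l _; rewrite big_bool /alice_coord /bob_coord /=.
by case: (alice_gram j f k l) => a b; case: (bob_gram j g k l) => c d /=; ring.
Qed.

End Decomposition.

(* Each sent qubit at most doubles the number of product terms across the cut. *)
Lemma cstate_decomposes (R : realType) pA N pB (A B : Type) j0 s
    (UA : A -> nat -> op R (CI pA N pB)) (UB : B -> nat -> op R (CI pA N pB)) t :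
  exists (K : finType) (f : A -> K -> CI pA N pB -> R[i]) (g : B -> K -> CI pA N pB -> R[i]),
    (#|K| <= 2 ^ t)%N /\
    forall a b, decomposes (cut j0 s t) (f a) (g b) (cstate j0 s (UA a) (UB b) t).
Proof.
elim: t => [|t [K [f [g [card_K dec]]]]].
  exists unit, (fun _ _ w => (w == ground pA N pB)%:R), (fun _ _ z => (z == ground pA N pB)%:R).
  by split=> [|a b]; [rewrite card_unit | exact: decomposes_ground].
have card_Kb : (#|{: K * bool}| <= 2 ^ t.+1)%N.
  by rewrite card_prod card_bool expnSr leq_mul2r card_K orbT.
set j := cut j0 s t; case s_t: (s t).
  exists (K * bool)%type,
    (fun a p w => \sum_(w' | alice_part j w' == w')
       UA a t (alice_part j (set_qubit j.-1 w p.2)) w' * f a p.1 w'),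
    (fun b p z => (qubit j.-1 z == p.2)%:R * g b p.1 (bob_part j z)).
  split=> // a b; rewrite /= /Defs.lift s_t -/j.
  exact: decomposes_cut_pred (decomposes_liftA (UA a t) (dec a b)).
exists (K * bool)%type,
  (fun a p w => (qubit j w == p.2)%:R * f a p.1 (alice_part j w)),
  (fun b p z => \sum_(z' | bob_part j z' == z')
     UB b t (bob_part j (set_qubit j z p.2)) z' * g b p.1 z').
split=> // a b; rewrite /= /Defs.lift s_t -/j.
exact: decomposes_cut_succ (decomposes_liftB (UB b t) (dec a b)).
Qed.

Lemma ue_comm_sign_representation (R : realType) n1 n2
    (h : {ffun 'I_n1 -> bool} -> {ffun 'I_n2 -> bool} -> bool) c :
  ue_comm R h c ->
  exists (M : finType) (F : {ffun 'I_n1 -> bool} -> M -> R) (G : {ffun 'I_n2 -> bool} -> M -> R),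
    (#|M| <= 2 * 4 ^ c)%N /\
    forall a b, let p := \sum_m F a m * G b m in if h a b then 1 / 2 < p else p < 1 / 2.
Proof.
case=> pA [N [pB [j0 [s [UA [UB [o [PA [PB [_ [_ [_ [_ [_ [_ accept]]]]]]]]]]]]]]].
have [K [f [g [card_K dec]]]] := cstate_decomposes j0 s UA UB c.
set j := cut j0 s c.
pose fm a := if o then fun k w => \sum_(w' | alice_part j w' == w') PA a w w' * f a k w'
             else f a.
pose gm b := if o then g b
             else fun k z => \sum_(z' | bob_part j z' == z') PB b z z' * g b k z'.
have decm a b : decomposes j (fm a) (gm b)
    (apply (Defs.lift o j (if o then PA a else PB b)) (cstate j0 s (UA a) (UB b) c)).
  rewrite /fm /gm /Defs.lift; destruct o.
    exact: decomposes_liftA (dec a b).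
  exact: decomposes_liftB (dec a b).
exists (K * K * bool)%type,
  (fun a p => alice_coord j (fm a) p.1.1 p.1.2 p.2),
  (fun b p => bob_coord j (gm b) p.1.1 p.1.2 p.2).
split=> [|a b /=].
  have -> : (4 ^ c = 2 ^ c * 2 ^ c)%N by rewrite -expnMn.
  by rewrite !card_prod card_bool [(2 * _)%N]mulnC leq_mul2r leq_mul.
rewrite -(norm2_decomposes (decm a b)); have := accept a b.
by case: (h a b) => //= ?; lra.
Qed.

(** * Sign representations and DOMB *)

Lemma sum_sign_agree_gt0 (R : realDomainType) (I : finType) (u v : I -> R) (i0 : I) :
  (forall i, 0 < u i -> 0 < v i) -> (forall i, u i <= 0 -> v i < 0) ->
  u i0 != 0 -> 0 < \sum_i u i * v i.
Proof.
move=> pos neg nz_i0.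
have term_ge0 i : 0 <= u i * v i.
  have [u_le0|u_gt0] := lerP (u i) 0.
    by apply: mulr_le0 => //; apply/ltW/neg.
  by apply: mulr_ge0; apply/ltW => //; apply: pos.
rewrite (bigD1 i0) //= ltr_pwDl ?sumr_ge0 //.
have [u_le0|u_gt0] := lerP (u i0) 0; last by rewrite mulr_gt0 ?pos.
by rewrite nmulr_lgt0 ?neg // lt_neqAle nz_i0.
Qed.

(* Affine threshold functions on R^M shatter at most #|M| + 1 points: a nonzero
   dependency among the rows [(y k, -1/2)] is incompatible with the threshold
   pattern given by its own signs. *)
Lemma affine_shatter_card_le (R : realFieldType) (M : finType) d (y : 'I_d -> M -> R) :
  (forall P : 'I_d -> bool, exists x : M -> R, forall k,
     let p := \sum_m x m * y k m in if P k then 1 / 2 < p else p < 1 / 2) ->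
  (d <= #|M|.+1)%N.
Proof.
move=> shatter; rewrite leqNgt; apply/negP => lt_Md.
pose Y : 'M[R]_(d, #|M| + 1) :=
  row_mx (\matrix_(k, c) y k (enum_val c)) (const_mx (- (1 / 2))).
have : kermx Y != 0.
  rewrite kermx_eq0 -row_leq_rank -ltnNge (leq_trans _ lt_Md) // ltnS.
  by rewrite (leq_trans (rank_leq_col Y)) ?addn1.
case/matrix0Pn => i0 [k0 nz_u]; pose u := row i0 (kermx Y).
have [x sep] := shatter (fun k => 0 < u 0 k).
pose xv : 'cV[R]_(#|M| + 1) := col_mx (\col_c x (enum_val c)) (const_mx 1).
have Yx k : (Y *m xv) k 0 = \sum_m x m * y k m - 1 / 2.
  rewrite mul_row_col !mxE big_ord1 !mxE mulr1; congr (_ - _).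
  rewrite (reindex (@enum_val M predT)) /=; last exact: onW_bij _ (enum_val_bij M).
  by apply: eq_bigr => c _; rewrite !mxE mulrC.
have : 0 < \sum_k u 0 k * ((Y *m xv) k 0).
  apply: (sum_sign_agree_gt0 (i0 := k0)) => [k|k|]; last by rewrite mxE.
    by move=> u_gt0; have := sep k; rewrite Yx /= u_gt0; lra.
  by rewrite leNgt => /negbTE u_le0; have := sep k; rewrite Yx /= u_le0; lra.
have -> : \sum_k u 0 k * (Y *m xv) k 0 = (u *m Y *m xv) 0 0.
  by rewrite -mulmxA mxE.
by rewrite -row_mul mulmx_ker row0 mul0mx mxE ltxx.
Qed.

Lemma omb_pred0 n (x : {ffun 'I_n -> bool}) : x =1 xpred0 -> omb x = false.
Proof. by move=> x0; rewrite /omb big_pred0. Qed.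

Lemma omb_pred1 n (x : {ffun 'I_n -> bool}) (i0 : 'I_n) :
  x =1 pred1 i0 -> omb x = odd i0.+1.
Proof. by move=> x1; rewrite /omb (big_pred1 i0). Qed.

Definition even_point n (k : nat) : {ffun 'I_n -> bool} := [ffun i : 'I_n => i == k.*2 :> nat].

Definition even_set n d (P : 'I_d -> bool) : {ffun 'I_n -> bool} :=
  [ffun i : 'I_n => [exists k : 'I_d, (i == k.*2 :> nat) && P k]].

(* Position [k.*2] is the odd 1-based index [2k+1]. *)
Lemma domb_even_set n d (P : 'I_d -> bool) (k : 'I_d) :
  (k.*2 < n)%N -> domb (even_set n P) (even_point n k) = P k.
Proof.
move=> lt_kn; rewrite /domb; case: (boolP (P k)) => [Pk|nPk].
  rewrite (omb_pred1 (i0 := Ordinal lt_kn)) /= ?odd_double // => i; rewrite !ffunE /=.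
  apply/andP/eqP => [[_ /eqP i_k]|i_k]; first exact: val_inj.
  by rewrite i_k eqxx; split=> //; apply/existsP; exists k; rewrite eqxx.
apply: omb_pred0 => i; rewrite !ffunE /=; apply/negbTE/negP.
case/andP=> /existsP[l /andP[/eqP i_l Pl] /eqP i_k].
suff l_k : l = k by move: nPk; rewrite -l_k Pl.
by apply: val_inj; move: i_l; rewrite i_k => /eqP; rewrite -!muln2 eqn_mul2r => /eqP.
Qed.

Lemma double_lt_of_lt_half n k : (k < n.+1./2)%N -> (k.*2 < n)%N.
Proof.
by move=> lt_k; have := odd_double_half n.+1; move: lt_k; rewrite -!muln2; case: odd; lia.
Qed.

Lemma ue_comm_domb_size (R : realType) n c : ue_comm R (domb (n:=n)) c -> (n <= 8 * 4 ^ c)%N.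
Proof.
case/ue_comm_sign_representation => M [F [G [card_M rep]]].
have le_half : (n.+1./2 <= #|M|.+1)%N.
  apply: (affine_shatter_card_le (y := fun k => G (even_point n k))) => P.
  exists (F (even_set n P)) => k.
  by rewrite -(domb_even_set P (double_lt_of_lt_half (ltn_ord k))); exact: rep.
have := odd_double_half n.+1; have : (0 < 4 ^ c)%N by rewrite expn_gt0.
by move: le_half card_M; rewrite -!muln2; case: odd; lia.
Qed.

(** * A one-query algorithm for OMB *)

Definition omb_weight (R : pzRingType) n (x : {ffun 'I_n -> bool}) (i : 'I_n) : R :=
  if x i then (-1) ^+ i * 2 ^+ i else 0.

Lemma omb_weight_below (R : realDomainType) n (x : {ffun 'I_n -> bool}) (j : 'I_n) :
  (forall i, x i -> (i <= j)%N) ->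
  `|\sum_(i | i != j) omb_weight R x i| <= 2 ^+ j - 1.
Proof.
move=> top; apply: le_trans (ler_norm_sum _ _ _) _.
have -> : 2 ^+ j - 1 = \sum_(i < n | (i < j)%N) 2 ^+ i :> R.
  by rewrite subrX1 (big_ord_widen n (fun i => 2 ^+ i) (ltnW (ltn_ord j))) addrK mul1r.
rewrite [leRHS]big_mkcond [leLHS]big_mkcond; apply: ler_sum => i _ /=.
have [lt_ij|le_ji] := ltnP i j.
  case: (i != j); last exact: exprn_ge0.
  rewrite /omb_weight; case: (x i); last by rewrite normr0 exprn_ge0.
  by rewrite normrM normrX normrN normr1 expr1n mul1r ger0_norm ?exprn_ge0.
have [//|ne_ij] := eqVneq i j.
suff xi0 : x i = false by rewrite /omb_weight xi0 normr0.
by apply/negbTE/negP => /top; move: ne_ij le_ji; rewrite -(inj_eq val_inj) /=; lia.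
Qed.

Lemma omb_weight_sum (R : realDomainType) n (x : {ffun 'I_n -> bool}) :
  if omb x then 1 <= \sum_i omb_weight R x i else \sum_i omb_weight R x i <= 0.
Proof.
case: (pickP x) => [i1 xi1|x0]; last first.
  by rewrite omb_pred0 // big1 // => i _; rewrite /omb_weight x0.
case: (arg_maxnP (fun i : 'I_n => i.+1) xi1) => j xj top.
have -> : omb x = odd j.+1.
  rewrite /omb; congr odd; apply/eqP; rewrite eqn_leq leq_bigmax_cond // andbT.
  exact/bigmax_leqP.
rewrite (bigD1 j) //=.
have -> : omb_weight R x j = (-1) ^+ odd j * 2 ^+ j by rewrite /omb_weight xj signr_odd.
have := omb_weight_below R top; rewrite ler_norml.
by case: (odd j) => /= /andP[]; lra.
Qed.

Section Operators.
Variable R : realType.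
Variable X : finType.

Definition idop : op R X := fun u v => (u == v)%:R.
Definition diagop (S : pred X) : op R X := fun u v => ((u == v) && S u)%:R.

Lemma apply_idop (v : vec R X) : apply idop v = v.
Proof.
apply: funext => u; rewrite /apply /idop (bigD1 u) //= eqxx mul1r big1 ?addr0 // => y.
by rewrite eq_sym => /negbTE ->; rewrite mul0r.
Qed.

Lemma apply_diagop S (v : vec R X) : apply (diagop S) v = fun u => (S u)%:R * v u.
Proof.
apply: funext => u; rewrite /apply /diagop (bigD1 u) //= eqxx big1 ?addr0 // => y.
by rewrite eq_sym => /negbTE ->; rewrite mul0r.
Qed.

Lemma idop_unitary : unitary idop.
Proof.
move=> u v; rewrite /idop (bigD1 u) //= eqxx rmorph1 mul1r big1 ?addr0 1?eq_sym // => y.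
by move=> /negbTE ->; rewrite rmorph0 mul0r.
Qed.

Lemma diagop_projector S : projector (diagop S).
Proof.
split=> [u v|u v]; first by rewrite /diagop rmorph_nat; case: eqVneq => [->|].
rewrite (bigD1 u) //= big1 ?addr0 => [|y /negbTE]; last first.
  by rewrite /diagop eq_sym => ->; rewrite mul0r.
rewrite /diagop eqxx /=; case: eqVneq => [->|_] /=; last by rewrite mulr0.
by case: (S v); rewrite ?mul1r ?mul0r.
Qed.

Lemma sqmod_bool (b : bool) (z : R[i]) : sqmod (b%:R * z) = b%:R * sqmod z.
Proof. by case: b; rewrite ?mul1r ?mul0r // /sqmod /=; lra. Qed.

End Operators.

Section Oracle.
Variable R : realType.
Variables n w : nat.

Definition flip (x : {ffun 'I_n -> bool}) (u : QI n w) : QI n w :=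
  (u.1.1, u.1.2 (+) x u.1.1, u.2).

Lemma apply_oracle x (v : vec R (QI n w)) : apply (oracle R x) v = v \o flip x.
Proof.
apply: funext => u; rewrite /apply /oracle (bigD1 (flip x u)) //= addbK !eqxx mul1r.
rewrite big1 ?addr0 // => -[[i b] z] ne_u; rewrite (_ : _ && _ = false) ?mul0r //.
apply: contraNF ne_u => /andP[/andP[/eqP e1 /eqP e2] /eqP e3].
by rewrite /flip e2 e1 e3 addbK.
Qed.

Lemma qstate_idop1 x (psi : vec R (QI n w)) :
  qstate (fun _ => @idop R _) x psi 1 = psi \o flip x.
Proof. by rewrite /= !apply_idop apply_oracle. Qed.

Lemma sum_QI (F : QI n w -> R) :
  \sum_u F u = \sum_(i : 'I_n) \sum_(b : bool) \sum_(z : 'I_w.+1) F (i, b, z).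
Proof.
rewrite (pair_bigA _ (fun i b => \sum_(z : 'I_w.+1) F (i, b, z))) /=.
rewrite (pair_bigA _ (fun ib (z : 'I_w.+1) => F (ib.1, ib.2, z))) /=.
by apply: eq_bigr => -[[i b] z].
Qed.

End Oracle.

Section OmbAlgorithm.
Variable R : realType.
Variable n : nat.
Hypothesis n_gt0 : (0 < n)%N.

(* Index [i] carries total weight [share], spread over the workspace values:
   value 0 (weight proportional to [2 ^ i]) is accepted iff the oracle answer
   is [~~ odd i], value 1 is always accepted and value 2 is padding.  The
   offsets make index [i] contribute [base + scale * omb_weight x i]. *)
Definition share : R := 1 / n%:R.
Definition scale : R := share / (4 * 2 ^+ n).
Definition base : R := (1 / 2 - scale / 2) * share.
Definition probe_weight (i : 'I_n) : R := scale * 2 ^+ i.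
Definition offset_weight (i : 'I_n) : R := base - (odd i)%:R * probe_weight i.
Definition weight (i : 'I_n) (z : 'I_3) : R :=
  if z == 0 :> nat then probe_weight i
  else if z == 1 :> nat then offset_weight i
  else share - probe_weight i - offset_weight i.

Definition omb_init : vec R (QI n 2) :=
  fun u => if u.1.2 then 0 else (Num.sqrt (weight u.1.1 u.2))%:C%C.
Definition omb_accept (u : QI n 2) : bool :=
  ((u.2 == 0 :> nat) && (u.1.2 == ~~ odd u.1.1)) || (u.2 == 1 :> nat).

Lemma share_n : share * n%:R = 1.
Proof. by rewrite /share mul1r mulVf // pnatr_eq0 -lt0n. Qed.

Lemma share_gt0 : 0 < share.
Proof. by rewrite /share divr_gt0 // ltr0n. Qed.

Lemma scale_gt0 : 0 < scale.
Proof. by rewrite /scale divr_gt0 ?share_gt0 // mulr_gt0 // exprn_gt0. Qed.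

Lemma probe_weight_le i : probe_weight i <= share / 4.
Proof.
have pow_le : (2 ^+ i : R) <= 2 ^+ n by rewrite ler_eXn2l ?ltr1n // ltnW.
have -> : share / 4 = scale * 2 ^+ n.
  by rewrite /scale; field; apply/expf_neq0; rewrite pnatr_eq0.
by rewrite /probe_weight ler_wpM2l // ltW ?scale_gt0.
Qed.

Lemma scale_le : scale <= 1 / 4.
Proof.
rewrite /scale ler_pdivrMr ?mulr_gt0 ?exprn_gt0 //.
have : share <= 1 by rewrite /share ler_pdivrMr ?ltr0n // mul1r ler1n.
have : (1 : R) <= 2 ^+ n by rewrite exprn_ege1 // ler1n.
nra.
Qed.

Lemma base_bounds : share / 4 <= base <= share / 2.
Proof. have := scale_le; have := scale_gt0; have := share_gt0; rewrite /base; nra. Qed.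

Lemma base_n : base *+ n = 1 / 2 - scale / 2.
Proof. by rewrite -[base *+ n]mulr_natr /base -mulrA share_n mulr1. Qed.

Lemma weight_ge0 i z : 0 <= weight i z.
Proof.
have P_ge0 : 0 <= probe_weight i by rewrite mulr_ge0 ?exprn_ge0 // ltW ?scale_gt0.
have := probe_weight_le i; have /andP[] := base_bounds; have := share_gt0.
rewrite /weight /offset_weight; case: (nat_of_ord z) => [|[|k]]; case: odd => /=; lra.
Qed.

Lemma sum_weight i : \sum_(z < 3) weight i z = share.
Proof. by rewrite !big_ord_recl big_ord0 /weight /=; ring. Qed.

Lemma sqmod_omb_init u : sqmod (omb_init u) = if u.1.2 then 0 else weight u.1.1 u.2.
Proof.
rewrite /omb_init /sqmod; case: u.1.2 => /=; first lra.
by rewrite sqr_sqrtr ?weight_ge0 //; lra.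
Qed.

Lemma norm2_omb_init : norm2 omb_init = 1.
Proof.
rewrite /norm2 sum_QI (eq_bigr (fun _ => share)) => [|i _].
  by rewrite sumr_const card_ord -mulr_natr share_n.
rewrite big_bool /= big1 ?add0r => [|z _]; last by rewrite sqmod_omb_init.
by rewrite -(sum_weight i); apply: eq_bigr => z _; rewrite sqmod_omb_init.
Qed.

Lemma omb_accept_mass (x : {ffun 'I_n -> bool}) i :
  \sum_(b : bool) \sum_(z : 'I_3)
    (omb_accept (i, b, z))%:R * (if b (+) x i then 0 else weight i z) =
  base + scale * omb_weight R x i.
Proof.
rewrite big_bool !big_ord_recl !big_ord0 /omb_accept /weight /offset_weight.
rewrite /probe_weight /omb_weight /=; rewrite -signr_odd.
by case: (x i); case: (odd i) => /=; ring.
Qed.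

Lemma omb_accept_prob (x : {ffun 'I_n -> bool}) :
  norm2 (apply (diagop R omb_accept) (qstate (fun _ => @idop R _) x omb_init 1)) =
  1 / 2 - scale / 2 + scale * \sum_i omb_weight R x i.
Proof.
rewrite qstate_idop1 apply_diagop /norm2 sum_QI.
rewrite (eq_bigr (fun i => base + scale * omb_weight R x i)) => [|i _]; last first.
  rewrite -omb_accept_mass; apply: eq_bigr => b _; apply: eq_bigr => z _.
  by rewrite sqmod_bool sqmod_omb_init.
by rewrite big_split /= sumr_const card_ord -mulr_sumr base_n.
Qed.

End OmbAlgorithm.

Lemma ue_query_omb (R : realType) n : (0 < n)%N -> ue_query R (@omb n) 1.
Proof.
move=> n_gt0; exists 2, (@omb_init R n), (fun _ => @idop R _), (diagop R (@omb_accept n)).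
split=> [|t _|| x /=]; [exact: norm2_omb_init | exact: idop_unitary | exact: diagop_projector |].
rewrite omb_accept_prob //; have := omb_weight_sum R x; have := scale_gt0 R n_gt0.
by case: omb => /=; nra.
Qed.

(* Without a query the final state, hence the acceptance probability, does not
   depend on the input. *)
Lemma ue_query_omb_gt0 (R : realType) n t : (0 < n)%N -> ue_query R (@omb n) t -> (0 < t)%N.
Proof.
move=> n_gt0 [w [psi [U [P [_ _ _ accept]]]]]; case: t accept => // accept.
have := accept (even_point n 0); have := accept [ffun => false].
rewrite omb_pred0 => [|i]; last by rewrite ffunE.
rewrite (omb_pred1 (i0 := Ordinal n_gt0)) => [/=|i]; first lra.
by rewrite ffunE /= -val_eqE.
Qed.

Lemma log2_le_nat (R : realType) (x : R) m : 0 < x -> x <= 2 ^+ m -> log2 x <= m%:R.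
Proof.
move=> x_gt0 le_x; have ln2_gt0 : (0 : R) < ln 2 by rewrite ln_gt0 // ltr1n.
by rewrite /log2 ler_pdivrMr // mulr_natl -lnXn ?ler_ln // ?posrE ?exprn_gt0.
Qed.

Theorem theorem3 (R : realType) (n : nat) : (0 < n)%N ->
  UQ_is R (@omb n) 1 /\
  UQC_ge (domb (n:=n)) ((log2 (n%:R : R) - 3) / 2).
Proof.
move=> n_gt0; split; first by split=> [|t]; [exact: ue_query_omb | exact: ue_query_omb_gt0].
move=> c /ue_comm_domb_size le_n.
have : log2 (n%:R : R) <= (2 * c + 3)%N%:R.
  by apply: log2_le_nat; rewrite ?ltr0n // -natrX ler_nat expnD expnM mulnC.
rewrite natrD natrM; lra.
Qed.
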